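(* Let $n\ge2$ and let $T$ be a symmetric linear isomorphism of $\mathbb R^n$ which is not positive-definite. Then the equation $X^\circ=T(X)$ has infinitely many solutions $X\in\mathcal K_{(0),b}^n$. In particular $X^\circ=-X$ has infinitely many solutions in $\mathcal K_{(0),b}^n$.
   Context: $\mathcal K_{(0),b}^n$: compact convex subsets of $\mathbb R^n$ containing $0$ in their interior. Polar: $X^\circ=\{x:\sup_{a\in X}\langle a,x\rangle\le1\}$. *)

From HB Require Import structures.
From mathcomp Require Import all_boot all_order all_algebra.
From mathcomp Require Import all_classical all_reals all_analysis.
Set Implicit Arguments. Unset Strict Implicit. Unset Printing Implicit Defensive.
Import Order.TTheory GRing.Theory Num.Theory.
Import numFieldNormedType.Exports.
Local Open Scope classical_set_scope.
Local Open Scope ring_scope.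

Definition inner (R : realType) (n : nat) (u v : 'rV[R]_n) : R :=
  \sum_(i < n) u 0 i * v 0 i.

Definition polar (R : realType) (n : nat) (X : set 'rV[R]_n) : set 'rV[R]_n :=
  [set x | forall a, X a -> inner a x <= 1].

Definition convex_set (R : realType) (n : nat) (X : set 'rV[R]_n) : Prop :=
  forall x y, X x -> X y -> forall t : R, 0 <= t -> t <= 1 ->
    X (t *: x + (1 - t) *: y).

Definition K0b (R : realType) (n : nat) (X : set 'rV[R]_n) : Prop :=
  compact X /\ convex_set X /\ (interior X) 0.

Definition lin_img (R : realType) (n : nat) (T : 'M[R]_n) (X : set 'rV[R]_n)
  : set 'rV[R]_n := (fun x => x *m T) @` X.

Definition posdef (R : realType) (n : nat) (T : 'M[R]_n) : Prop :=
  forall x : 'rV[R]_n, x != 0 -> 0 < inner x (x *m T).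

From Pilot Require Import Defs.
From HB Require Import structures.
From mathcomp Require Import all_boot all_order all_algebra.
From mathcomp Require Import all_classical all_reals all_analysis.
From mathcomp Require Import ring lra zify.
Import Order.TTheory GRing.Theory Num.Theory.
Import numFieldNormedType.Exports.
Local Open Scope classical_set_scope.
Local Open Scope ring_scope.
Set Implicit Arguments. Unset Strict Implicit. Unset Printing Implicit Defensive.

(* Diagonalize the symmetric form of [T] by a congruence, [P T P^T = diag e], with
   some [e_k < 0] since [T] is not positive definite.  In the coordinates
   [z = x P^-1] the pairing [<a, x T>] becomes [sum_i e_i z_i z'_i], and a body
   [{z | sum_i phi_i(z_i)^2 <= 1}], where [phi_i] is the gauge of a segment
   [[-1/b_i, 1/a_i]], is its own polar for this pairing as soon as
   [a_i b_i = |e_i|] and [a_i = b_i] when [e_i > 0].  Such a body [X] satisfies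
   [X^o = T(X)], and for [e_k < 0] the weight [a_k > 0] is a free parameter, so
   there are infinitely many of them. *)

Section SegmentGauge.
Context {R : realFieldType}.
Variables a b : R.
Hypotheses (a_gt0 : 0 < a) (b_gt0 : 0 < b).

(* The gauge of the segment [[-1/b, 1/a]]: [a s] for [s >= 0], [- b s] for [s <= 0]. *)
Definition seg_gauge (s : R) := ((a + b) * `|s| + (a - b) * s) / 2.

Lemma seg_gauge_ge {s} : 0 <= s -> seg_gauge s = a * s.
Proof. by move=> s_ge0; rewrite /seg_gauge ger0_norm //; field. Qed.

Lemma seg_gauge_lt {s} : s < 0 -> seg_gauge s = b * - s.
Proof. by move=> s_lt0; rewrite /seg_gauge ltr0_norm //; field. Qed.

Lemma seg_gauge0 : seg_gauge 0 = 0.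
Proof. by rewrite seg_gauge_ge ?mulr0. Qed.

Lemma seg_gauge_ge0 s : 0 <= seg_gauge s.
Proof.
have [s_ge0|s_lt0] := leP 0 s.
  by rewrite seg_gauge_ge // mulr_ge0 // ltW.
by rewrite seg_gauge_lt // mulr_ge0 ?oppr_ge0 // ltW.
Qed.

Lemma seg_gaugeZ l s : 0 <= l -> seg_gauge (l * s) = l * seg_gauge s.
Proof. by move=> l_ge0; rewrite /seg_gauge normrM (ger0_norm l_ge0); field. Qed.

Lemma ler_norm_seg_gauge s : `|s| <= seg_gauge s * (a^-1 + b^-1).
Proof.
have ainv_gt0 : 0 < a^-1 by rewrite invr_gt0.
have binv_gt0 : 0 < b^-1 by rewrite invr_gt0.
have [s_ge0|s_lt0] := leP 0 s.
  rewrite seg_gauge_ge // ger0_norm // mulrDr mulrAC mulfV ?gt_eqF // mul1r.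
  by rewrite lerDl mulr_ge0 // ?mulr_ge0 // ltW.
rewrite seg_gauge_lt // ltr0_norm // mulrDr [b * _ * b^-1]mulrAC mulfV ?gt_eqF //.
by rewrite mul1r lerDr mulr_ge0 // ?mulr_ge0 ?oppr_ge0 // ltW.
Qed.

Variable d : R.
Hypotheses (ab_normd : a * b = `|d|) (d_gt0_eq : 0 < d -> a = b).

(* For [d > 0] this is Cauchy-Schwarz for [a |.|]; for [d < 0] it is trivial
   unless [s] and [r] have opposite signs, where it is an equality. *)
Lemma ler_mul_seg_gauge s r : d * s * r <= seg_gauge s * seg_gauge r.
Proof.
have [d_gt0|d_le0] := ltP 0 d.
  have a_eq_b := d_gt0_eq d_gt0.
  have gaugeE x : seg_gauge x = `|a * x|.
    by rewrite /seg_gauge -a_eq_b normrM gtr0_norm //; field.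
  have -> : d * s * r = a * s * (a * r).
    by rewrite -(gtr0_norm d_gt0) -ab_normd -a_eq_b; ring.
  by rewrite !gaugeE -normrM ler_norm.
have dE : d = - (a * b) by rewrite ab_normd ler0_norm ?opprK.
have ab_gt0 : 0 < a * b by rewrite mulr_gt0.
rewrite dE.
have [s_ge0|s_lt0] := leP 0 s;
  [rewrite (seg_gauge_ge s_ge0) | rewrite (seg_gauge_lt s_lt0)];
  (have [r_ge0|r_lt0] := leP 0 r;
  [rewrite (seg_gauge_ge r_ge0) | rewrite (seg_gauge_lt r_lt0)]).
- have : 0 <= a * b * (s * r) by rewrite !mulr_ge0 // ltW.
  have : 0 <= a * s * (a * r) by rewrite mulrACA !mulr_ge0 // ltW.
  nra.
- lra.
- lra.
- have sr_gt0 : 0 < s * r by rewrite nmulr_rgt0.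
  have : 0 <= a * b * (s * r) by rewrite mulr_ge0 ?ltW.
  have : 0 <= b * - s * (b * - r).
    by rewrite mulrACA mulrNN -expr2 mulr_ge0 ?sqr_ge0 ?ltW.
  nra.
Qed.

(* The point of the dual segment where the bound above is attained. *)
Definition seg_dual (r : R) : R :=
  if 0 < d then r else if 0 <= r then - (a / b) * r else (b / a) * - r.

Lemma seg_gauge_dual r : seg_gauge (seg_dual r) = seg_gauge r.
Proof.
rewrite /seg_dual; case: ifP => // _.
have [r_ge0|r_lt0] := leP 0 r.
  have [->|r_neq0] := eqVneq r 0; first by rewrite mulr0.
  have r_gt0 : 0 < r by rewrite lt_neqAle eq_sym r_neq0.
  have dual_lt0 : - (a / b) * r < 0 by rewrite mulNr oppr_lt0 mulr_gt0 ?divr_gt0.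
  rewrite (seg_gauge_ge r_ge0) (seg_gauge_lt dual_lt0).
  by rewrite mulNr opprK mulrA mulrCA mulfV ?gt_eqF ?mulr1.
have dual_ge0 : 0 <= b / a * - r by rewrite mulr_ge0 ?divr_ge0 ?oppr_ge0 ?ltW.
rewrite (seg_gauge_lt r_lt0) (seg_gauge_ge dual_ge0).
by rewrite mulrA mulrCA mulfV ?gt_eqF ?mulr1.
Qed.

Lemma mul_seg_dual r : d * seg_dual r * r = seg_gauge r ^+ 2.
Proof.
rewrite /seg_dual; case: ifP => [d_gt0|d_le0].
  have a_eq_b := d_gt0_eq d_gt0.
  have dE : d = a * a by rewrite -(gtr0_norm d_gt0) -ab_normd a_eq_b.
  by have [r_ge0|r_lt0] := leP 0 r;
    [rewrite (seg_gauge_ge r_ge0) | rewrite (seg_gauge_lt r_lt0)];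
    rewrite dE -?a_eq_b; ring.
have dE : d = - (a * b) by rewrite ab_normd ler0_norm ?opprK // leNgt d_le0.
have [a_neq0 b_neq0] : a != 0 /\ b != 0 by rewrite !gt_eqF.
by have [r_ge0|r_lt0] := leP 0 r;
  [rewrite (seg_gauge_ge r_ge0) | rewrite (seg_gauge_lt r_lt0)]; rewrite dE; field.
Qed.

End SegmentGauge.

Lemma seg_gauge_continuous (R : realType) (a b : R) : continuous (seg_gauge a b).
Proof.
move=> x; apply: cvgM; last exact: cvg_cst.
apply: cvgD; apply: cvgM; try exact: cvg_cst.
  exact: norm_continuous.
exact: cvg_id.
Qed.

Section DiagonalGauge.
Context {R : realFieldType} {n : nat}.
Variables d a b : 'I_n -> R.
Hypotheses (a_gt0 : forall i, 0 < a i) (b_gt0 : forall i, 0 < b i).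

Definition diag_gauge (z : 'rV[R]_n) := \sum_i seg_gauge (a i) (b i) (z 0 i) ^+ 2.

Definition diag_form (w z : 'rV[R]_n) := \sum_i d i * w 0 i * z 0 i.

Lemma diag_gauge_ge0 z : 0 <= diag_gauge z.
Proof. by apply: sumr_ge0 => i _; rewrite sqr_ge0. Qed.

Lemma diag_gauge0 : diag_gauge 0 = 0.
Proof. by rewrite /diag_gauge big1 // => i _; rewrite mxE seg_gauge0 expr0n. Qed.

Lemma diag_gauge_delta k c :
  0 <= c -> diag_gauge (c *: delta_mx 0 k) = (a k * c) ^+ 2.
Proof.
move=> c_ge0; rewrite /diag_gauge (bigD1 k) //= big1 => [|i /negbTE ik].
  by rewrite !mxE !eqxx mulr1 seg_gauge_ge // addr0.
by rewrite !mxE ik andbF mulr0 seg_gauge0 expr0n.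
Qed.

Lemma diag_form_comb w u v s t :
  diag_form w (s *: u + t *: v) = s * diag_form w u + t * diag_form w v.
Proof.
rewrite /diag_form !mulr_sumr -big_split /=.
by apply: eq_bigr => i _; rewrite !mxE; ring.
Qed.

Lemma diag_formE w z : diag_form w z = (w *m diag_mx (\row_i d i) *m z^T) 0 0.
Proof.
rewrite mul_mx_diag mxE; apply: eq_bigr => i _.
by rewrite !mxE (mulrC (w 0 i)).
Qed.

Lemma norm_coord_le_diag_gauge z i :
  diag_gauge z <= 1 -> `|z 0 i| <= (a i)^-1 + (b i)^-1.
Proof.
move=> z_le1.
have gauge_le1 : seg_gauge (a i) (b i) (z 0 i) ^+ 2 <= 1.
  apply: le_trans z_le1; rewrite /diag_gauge (bigD1 i) //= lerDl.
  by apply: sumr_ge0 => j _; rewrite sqr_ge0.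
have gauge_ge0 := seg_gauge_ge0 (a_gt0 i) (b_gt0 i) (z 0 i).
have inv_ge0 : 0 <= (a i)^-1 + (b i)^-1.
  by rewrite addr_ge0 // ltW // invr_gt0.
apply: le_trans (ler_norm_seg_gauge (a_gt0 i) (b_gt0 i) _) _.
by rewrite ler_piMl //; nra.
Qed.

Hypotheses (ab_normd : forall i, a i * b i = `|d i|)
  (d_gt0_eq : forall i, 0 < d i -> a i = b i).

Lemma diag_form_le1 w z :
  diag_gauge w <= 1 -> diag_gauge z <= 1 -> diag_form w z <= 1.
Proof.
move=> w_le1 z_le1.
suff : 2 * diag_form w z <= diag_gauge w + diag_gauge z by lra.
rewrite /diag_form /diag_gauge mulr_sumr -big_split /=; apply: ler_sum => i _.
have := ler_mul_seg_gauge (a_gt0 i) (b_gt0 i) (ab_normd i) (@d_gt0_eq i)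
  (w 0 i) (z 0 i).
have := sqr_ge0 (seg_gauge (a i) (b i) (w 0 i) - seg_gauge (a i) (b i) (z 0 i)).
nra.
Qed.

Definition diag_dual (z : 'rV[R]_n) := \row_i seg_dual (a i) (b i) (d i) (z 0 i).

Lemma diag_gauge_dualZ l z :
  0 < l -> diag_gauge (l *: diag_dual z) = l ^+ 2 * diag_gauge z.
Proof.
move=> l_gt0; rewrite /diag_gauge mulr_sumr; apply: eq_bigr => i _.
by rewrite !mxE seg_gaugeZ ?ltW // seg_gauge_dual // exprMn.
Qed.

Lemma diag_form_dualZ l z : diag_form (l *: diag_dual z) z = l * diag_gauge z.
Proof.
rewrite /diag_form /diag_gauge mulr_sumr; apply: eq_bigr => i _.
rewrite !mxE -(mul_seg_dual (a_gt0 i) (b_gt0 i) (ab_normd i) (@d_gt0_eq i)).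
ring.
Qed.

(* If [diag_gauge z = g > 1], the test vector [l *: diag_dual z] with [l = 2/(g+1)]
   lies in the ball but pairs with [z] to [l g > 1]. *)
Lemma diag_gauge_le1P z :
  diag_gauge z <= 1 <-> forall w, diag_gauge w <= 1 -> diag_form w z <= 1.
Proof.
split=> [z_le1 w w_le1|polar_z]; first exact: diag_form_le1.
rewrite leNgt; apply/negP => z_gt1.
set g := diag_gauge z in z_gt1.
have g1_gt0 : 0 < g + 1 by rewrite ltr_wpDl ?diag_gauge_ge0.
pose l := 2 / (g + 1).
have l_gt0 : 0 < l by rewrite divr_gt0.
have l_g : l * (g + 1) = 2 by rewrite mulfVK ?gt_eqF.
have := polar_z (l *: diag_dual z); rewrite diag_gauge_dualZ // diag_form_dualZ -/g.
clearbody g l.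
have : 0 <= (l - 1) ^+ 2 by rewrite sqr_ge0.
have : 0 < l * (g - 1) by rewrite mulr_gt0 // subr_gt0.
nra.
Qed.

End DiagonalGauge.

Lemma diag_gauge_mulmx_continuous {R : realType} {n : nat} (a b : 'I_n -> R)
    (Q : 'M[R]_n) :
  continuous (fun x : 'rV[R]_n => diag_gauge a b (x *m Q)).
Proof.
have coordQ_cont i : continuous (fun x : 'rV[R]_n => (x *m Q) 0 i).
  under eq_fun do rewrite mxE.
  apply: continuous_big => [|j _ x]; first exact: add_continuous.
  by apply: continuousM; [exact: coord_continuous | exact: cst_continuous].
apply: continuous_big => [|i _ x]; first exact: add_continuous.
have gauge_cont :=
  continuous_comp (coordQ_cont i x) (@seg_gauge_continuous _ (a i) (b i) _).
exact: (continuous_comp gauge_cont (@exprn_continuous R 2 _)).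
Qed.

Section CongruenceDiagonalization.
Context {R : numFieldType} {n : nat}.
Variable T : 'M[R]_n.
Hypotheses (T_sym : T^T = T) (T_unit : T \in unitmx).

Let form (u v : 'rV[R]_n) := (u *m T *m v^T) 0 0.

Let formC u v : form u v = form v u.
Proof.
rewrite /form -[u *m T *m v^T]trmxK [in LHS]mxE.
by rewrite !trmx_mul trmxK T_sym mulmxA.
Qed.

Let formDl u u' v : form (u + u') v = form u v + form u' v.
Proof. by rewrite /form !mulmxDl mxE. Qed.

Let formDr u v v' : form u (v + v') = form u v + form u v'.
Proof. by rewrite formC formDl !(formC _ u). Qed.

(* Every [x] splits as a vector of [ker (T P^T)] plus a combination of the rows of
   [P].  If [ker (T P^T)] (nonzero since [m < n]) were totally isotropic, then by
   polarization (characteristic 0) it would be orthogonal to everything,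
   contradicting the invertibility of [T]. *)
Lemma exists_anisotropic_orthogonal m (P : 'M[R]_(m, n)) (e : 'rV[R]_m) :
    (m < n)%N -> P *m T *m P^T = diag_mx e -> (forall i, e 0 i != 0) ->
  exists2 v : 'rV[R]_n, v *m T *m P^T = 0 & form v v != 0.
Proof.
move=> lt_mn PTP e_neq0; set A := T *m P^T.
have orthE (v : 'rV_n) : v *m T *m P^T = v *m A by rewrite mulmxA.
have D_unit : diag_mx e \in unitmx.
  by rewrite unitmxE det_diag unitfE; apply/prodf_neq0 => i _.
have decomp (x : 'rV_n) :
    exists2 w : 'rV_n, w *m A = 0 & x = w + (x *m A *m invmx (diag_mx e)) *m P.
  exists (x - (x *m A *m invmx (diag_mx e)) *m P); last by rewrite subrK.
  by rewrite mulmxBl -(mulmxA _ P) (mulmxA P) PTP mulmxKV // subrr.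
have [v0 v0_ker v0_neq0] : exists2 v0 : 'rV_n, v0 *m A = 0 & v0 != 0.
  have /rowV0Pn[v0 v0_ker v0_neq0] : kermx A != 0.
    by rewrite kermx_eq0 /row_free; have := rank_leq_col A; lia.
  by exists v0 => //; apply/eqP; rewrite -sub_kermx.
apply: contrapT => no_aniso.
have isotropic v : v *m A = 0 -> form v v = 0.
  move=> vA; apply: contrapT => /eqP v_aniso; apply: no_aniso.
  by exists v; rewrite ?orthE.
have v0_orth x : form v0 x = 0.
  have [w wA ->] := decomp x.
  have v0w : form v0 w = 0.
    have := isotropic (v0 + w); rewrite mulmxDl v0_ker wA addr0 => /(_ erefl).
    rewrite formDl !formDr (isotropic _ v0_ker) (isotropic _ wA) (formC w) add0r addr0.
    by move/eqP; rewrite -mulr2n mulrn_eq0 => /eqP.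
  by rewrite formDr v0w /form trmx_mul mulmxA orthE v0_ker mul0mx mxE add0r.
have v0T : v0 *m T = 0.
  apply/rowP => j; rewrite [RHS]mxE -(v0_orth (delta_mx 0 j)).
  by rewrite /form trmx_delta -colE [RHS]mxE.
by move: v0_neq0; rewrite -[v0](mulmxK T_unit) v0T mul0mx eqxx.
Qed.

Lemma congruence_diag_rect m : (m <= n)%N ->
  exists P : 'M[R]_(m, n), exists2 e : 'rV[R]_m,
    P *m T *m P^T = diag_mx e & forall i, e 0 i != 0.
Proof.
elim: m => [|m IHm] le_mn.
  by exists 0, 0 => [|[]//]; apply/matrixP => -[].
have [P [e PTP e_neq0]] := IHm (ltnW le_mn).
have [v vP v_aniso] := exists_anisotropic_orthogonal le_mn PTP e_neq0.
exists (col_mx v P), (row_mx (const_mx (form v v) : 'rV_1) e).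
  have Pv : P *m T *m v^T = 0.
    by apply: trmx_inj; rewrite !trmx_mul trmxK T_sym mulmxA vP trmx0.
  have -> : col_mx v P *m T *m (col_mx v P)^T =
      block_mx (v *m T *m v^T) (v *m T *m P^T) (P *m T *m v^T) (P *m T *m P^T).
    by rewrite tr_col_mx mul_col_mx mul_col_row.
  rewrite vP Pv PTP (diag_mx_row (const_mx (form v v) : 'rV_1) e).
  by rewrite diag_const_mx /form -mx11_scalar.
move=> i; rewrite -(splitK (i : 'I_(1 + m))); case: (fintype.split _) => j /=.
  by rewrite (row_mxEl (const_mx (form v v) : 'rV_1)) mxE.
by rewrite (row_mxEr (const_mx (form v v) : 'rV_1)).
Qed.

Lemma congruence_diag : exists P : 'M[R]_n, exists e : 'rV[R]_n,
  [/\ P \in unitmx, P *m T *m P^T = diag_mx e & forall i, e 0 i != 0].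
Proof.
have [P [e PTP e_neq0]] := congruence_diag_rect (leqnn n).
exists P, e; split=> //.
have : \det (P *m T *m P^T) != 0.
  by rewrite PTP det_diag; apply/prodf_neq0 => i _.
by rewrite unitmxE unitfE !det_mulmx det_tr !mulf_eq0 !negb_or => /andP[/andP[]].
Qed.

End CongruenceDiagonalization.

Lemma bounded_set_rV {R : realType} {n : nat} (A : set 'rV[R]_n) (c : 'I_n -> R) :
  (forall x j, A x -> `|x 0 j| <= c j) -> bounded_set A.
Proof.
move=> A_le; exists (\sum_j `|c j|); split; first exact: num_real.
move=> M /ltW le_cM x Ax; rewrite /Num.Def.normr /= mx_normrE.
apply/bigmax_leP; split=> [|[i j] _ /=].
  by apply: le_trans le_cM; rewrite sumr_ge0.
rewrite ord1; apply: le_trans (A_le x j Ax) (le_trans (ler_norm _) _).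
by apply: le_trans le_cM; rewrite (bigD1 j) //= lerDl sumr_ge0.
Qed.

Lemma infinite_set_inj_nat {T : Type} (S : set T) (f : nat -> T) :
  injective f -> (forall m, S (f m)) -> infinite_set S.
Proof.
move=> f_inj Sf S_fin; apply: infinite_nat.
have -> : [set: nat] = f @^-1` (f @` setT).
  by apply/seteqP; split=> // m _; exists m.
apply: finite_preimage (sub_finite_set _ S_fin) => [x y _ _|_ [m _ <-]].
  exact: f_inj.
exact: Sf.
Qed.

Section SelfPolarGaugeBody.
Context {R : realType} {n : nat}.
Variables (T P : 'M[R]_n) (e : 'rV[R]_n).
Hypotheses (T_sym : T^T = T) (P_unit : P \in unitmx)
  (PTP : P *m T *m P^T = diag_mx e).

Lemma inner_mulmx_diag_form u x :
  inner u (x *m T) = diag_form (e 0) (u *m invmx P) (x *m invmx P).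
Proof.
have T_eq : T = invmx P *m diag_mx e *m (invmx P)^T.
  by rewrite -PTP !mulmxA mulVmx // mul1mx -mulmxA -trmx_mul mulVmx // trmx1 mulmx1.
have -> : inner u (x *m T) = (u *m (x *m T)^T) 0 0.
  by rewrite /inner [RHS]mxE; apply: eq_bigr => i _; rewrite [_^T _ _]mxE.
rewrite diag_formE (_ : \row_i e 0 i = e); last by apply/rowP => i; rewrite mxE.
by rewrite trmx_mul T_sym {1}T_eq !mulmxA -mulmxA -trmx_mul.
Qed.

Lemma posdef_diag_gt0 : (forall i, 0 < e 0 i) -> posdef T.
Proof.
move=> e_gt0 x x_neq0; rewrite inner_mulmx_diag_form.
set z := x *m invmx P.
have z_neq0 : z != 0.
  by apply: contra x_neq0 => /eqP z0; rewrite -(mulmxKV P_unit x) -/z z0 mul0mx.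
have term_ge0 i : 0 <= e 0 i * z 0 i * z 0 i.
  by rewrite -mulrA -expr2 mulr_ge0 ?sqr_ge0 ?ltW.
rewrite lt_def sumr_ge0 // andbT; apply: contra z_neq0 => /eqP/psumr_eq0P sum0.
apply/eqP/rowP => i; rewrite [RHS]mxE; have /eqP := sum0 (fun j _ => term_ge0 j) i isT.
by rewrite -mulrA mulf_eq0 (gt_eqF (e_gt0 i)) mulf_eq0 orbb => /eqP.
Qed.

Hypothesis T_unit : T \in unitmx.
Variables a b : 'I_n -> R.
Hypotheses (a_gt0 : forall i, 0 < a i) (b_gt0 : forall i, 0 < b i)
  (ab_normd : forall i, a i * b i = `|e 0 i|)
  (d_gt0_eq : forall i, 0 < e 0 i -> a i = b i).

Definition gauge_body := [set x : 'rV[R]_n | diag_gauge a b (x *m invmx P) <= 1].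

Lemma gauge_bodyP x : gauge_body x <->
  forall w, diag_gauge a b w <= 1 -> diag_form (e 0) w (x *m invmx P) <= 1.
Proof. exact: diag_gauge_le1P. Qed.

Lemma polar_gauge_body : polar gauge_body = lin_img T gauge_body.
Proof.
have body_mulmxP w : diag_gauge a b w <= 1 -> gauge_body (w *m P).
  by rewrite /gauge_body /= mulmxK.
apply/seteqP; split=> [y y_polar|_ [x /gauge_bodyP x_body <-] u u_body].
  exists (y *m invmx T); last by rewrite mulmxKV.
  apply/gauge_bodyP => w /body_mulmxP/y_polar.
  by rewrite -{1}(mulmxKV T_unit y) inner_mulmx_diag_form mulmxK.
by rewrite inner_mulmx_diag_form; apply: x_body.
Qed.

Lemma gauge_body_convex : Defs.convex_set gauge_body.
Proof.
move=> x y /gauge_bodyP x_body /gauge_bodyP y_body t t_ge0 t_le1.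
apply/gauge_bodyP => w w_le1.
rewrite mulmxDl -!scalemxAl diag_form_comb.
by have := x_body w w_le1; have := y_body w w_le1; nra.
Qed.

Lemma gauge_body_closed : closed gauge_body.
Proof.
have -> : gauge_body = (fun y => diag_gauge a b (y *m invmx P)) @^-1` [set r | r <= 1].
  by [].
apply: preimage_closed; last exact: closed_le.
by move=> x _; exact: diag_gauge_mulmx_continuous.
Qed.

Lemma gauge_body_bounded : bounded_set gauge_body.
Proof.
apply: (@bounded_set_rV _ _ _ (fun j => \sum_i ((a i)^-1 + (b i)^-1) * `|P i j|)).
move=> x j x_body; rewrite -[x](mulmxKV P_unit) mxE.
apply: le_trans (ler_norm_sum _ _ _) _; apply: ler_sum => i _.
by rewrite normrM ler_wpM2r // norm_coord_le_diag_gauge.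
Qed.

Lemma gauge_body_interior : (interior gauge_body) 0.
Proof.
pose U := (fun x => diag_gauge a b (x *m invmx P)) @^-1` [set r | r < 1].
apply: (@filterS _ _ _ U); first by move=> x /ltW.
apply: open_nbhs_nbhs; split.
  apply: open_comp; last exact: open_lt.
  by move=> x _; exact: diag_gauge_mulmx_continuous.
by rewrite /U /= mul0mx diag_gauge0.
Qed.

Lemma gauge_body_K0b : K0b gauge_body.
Proof.
split; first exact: bounded_closed_compact gauge_body_bounded gauge_body_closed.
by split; [exact: gauge_body_convex | exact: gauge_body_interior].
Qed.

End SelfPolarGaugeBody.

Section WeightFamily.
Context {R : realType} {n : nat}.
Variables (e : 'rV[R]_n) (k : 'I_n).
Hypotheses (e_neq0 : forall i, e 0 i != 0) (ek_lt0 : e 0 k < 0).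

(* Off [k] we take [a_i = b_i = sqrt |e_i|]; along the negative direction [k]
   only [a_k b_k = |e_k|] is required, which leaves [a_k = t] free. *)
Definition weight_a (t : R) i := if i == k then t else Num.sqrt `|e 0 i|.
Definition weight_b (t : R) i := if i == k then `|e 0 k| / t else Num.sqrt `|e 0 i|.

Variable t : R.
Hypothesis t_gt0 : 0 < t.

Lemma weight_a_gt0 i : 0 < weight_a t i.
Proof. by rewrite /weight_a; case: ifP => // _; rewrite sqrtr_gt0 normr_gt0. Qed.

Lemma weight_b_gt0 i : 0 < weight_b t i.
Proof.
by rewrite /weight_b; case: ifP => _; rewrite ?divr_gt0 ?sqrtr_gt0 ?normr_gt0.
Qed.

Lemma weight_ab i : weight_a t i * weight_b t i = `|e 0 i|.
Proof.
rewrite /weight_a /weight_b; case: eqP => [->|_]; last by rewrite -expr2 sqr_sqrtr.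
by rewrite mulrC divfK ?gt_eqF.
Qed.

Lemma weight_eq i : 0 < e 0 i -> weight_a t i = weight_b t i.
Proof.
by rewrite /weight_a /weight_b; case: eqP => // -> /(lt_trans ek_lt0); rewrite ltxx.
Qed.

End WeightFamily.

Section WeightedBodies.
Context {R : realType} {n : nat}.
Variables (T P : 'M[R]_n) (e : 'rV[R]_n) (k : 'I_n).
Hypotheses (T_sym : T^T = T) (T_unit : T \in unitmx) (P_unit : P \in unitmx)
  (PTP : P *m T *m P^T = diag_mx e) (e_neq0 : forall i, e 0 i != 0)
  (ek_lt0 : e 0 k < 0).

Definition weighted_body (t : R) := gauge_body P (weight_a e k t) (weight_b e k t).

Lemma weighted_body_self_polar t : 0 < t ->
  K0b (weighted_body t) /\ polar (weighted_body t) = lin_img T (weighted_body t).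
Proof.
move=> t_gt0.
have a_gt0 i : 0 < weight_a e k t i by exact: weight_a_gt0.
have b_gt0 i : 0 < weight_b e k t i by exact: weight_b_gt0.
have ab_normd i : weight_a e k t i * weight_b e k t i = `|e 0 i| by exact: weight_ab.
have d_gt0_eq i : 0 < e 0 i -> weight_a e k t i = weight_b e k t i by exact: weight_eq.
split; first exact: gauge_body_K0b.
exact: (polar_gauge_body T_sym P_unit PTP T_unit a_gt0 b_gt0 ab_normd d_gt0_eq).
Qed.

Lemma weighted_body_delta s t : 0 < s -> 0 < t ->
  weighted_body s ((t^-1 *: delta_mx 0 k) *m P) <-> s <= t.
Proof.
move=> s_gt0 t_gt0; rewrite /weighted_body /gauge_body /= mulmxK //.
have tinv_ge0 : 0 <= t^-1 by rewrite invr_ge0 ltW.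
rewrite diag_gauge_delta // /weight_a eqxx expr_le1 ?mulr_ge0 ?(ltW s_gt0) //.
by rewrite ler_pdivrMr // mul1r.
Qed.

Lemma weighted_body_inj s t :
  0 < s -> 0 < t -> weighted_body s = weighted_body t -> s = t.
Proof.
move=> s_gt0 t_gt0 eq_st; apply/eqP; rewrite eq_le; apply/andP; split.
  by apply/(weighted_body_delta s_gt0 t_gt0); rewrite eq_st; apply/weighted_body_delta.
by apply/(weighted_body_delta t_gt0 s_gt0); rewrite -eq_st; apply/weighted_body_delta.
Qed.

End WeightedBodies.

Theorem mainTheorem19 (R : realType) (n : nat) (T : 'M[R]_n) :
  (2 <= n)%N -> T^T = T -> T \in unitmx -> ~ posdef T ->
  ~ finite_set [set X : set 'rV[R]_n | K0b X /\ polar X = lin_img T X].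
Proof.
move=> _ T_sym T_unit T_npd.
have [P [e [P_unit PTP e_neq0]]] := congruence_diag T_sym T_unit.
have [k ek_lt0] : exists k, e 0 k < 0.
  apply: contrapT => e_nneg; apply/T_npd/(posdef_diag_gt0 T_sym P_unit PTP) => i.
  by rewrite lt_def e_neq0 leNgt; apply/negP => ei_lt0; apply: e_nneg; exists i.
have nat_gt0 m : 0 < m.+1%:R :> R by rewrite ltr0n.
apply: (@infinite_set_inj_nat _ _ (fun m => weighted_body P e k m.+1%:R)).
  move=> m1 m2 /(weighted_body_inj P_unit (nat_gt0 m1) (nat_gt0 m2)) /eqP.
  by rewrite eqr_nat => /eqP [].
move=> m; exact: weighted_body_self_polar.
Qed.
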